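(* For a (nondegenerate) triangle $AB\Gamma$, let $\ell_1$ be the line perpendicular to $AB$ through $B$, $\ell_2$ the line perpendicular to $B\Gamma$ through $\Gamma$, and $\ell_3$ the line perpendicular to $\Gamma A$ through $A$, and let $A'B'\Gamma'$ be the triangle bounded by these three lines. Let $E$ and $E'$ be the areas of $AB\Gamma$ and $A'B'\Gamma'$. Then, over all triangles $AB\Gamma$, the ratio $E'/E$ has minimum value $3$, and $E'/E = 3$ holds if and only if $AB\Gamma$ is equilateral (in which case $A'B'\Gamma'$ is also equilateral). *)

From Stdlib Require Import Reals.
Open Scope R_scope.

Definition point : Type := (R * R)%type.

Definition dist2 (P Q : point) : R :=
  (fst P - fst Q) ^ 2 + (snd P - snd Q) ^ 2.

(* twice the signed area of triangle PQR *)
Definition cross (P Q S : point) : R :=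
  (fst Q - fst P) * (snd S - snd P) - (snd Q - snd P) * (fst S - fst P).

Definition area (P Q S : point) : R := Rabs (cross P Q S) / 2.

Definition nondegenerate (P Q S : point) : Prop := cross P Q S <> 0.

Definition equilateral (P Q S : point) : Prop :=
  dist2 P Q = dist2 Q S /\ dist2 Q S = dist2 S P.

Definition on_perp (X Y U V : point) : Prop :=
  (fst X - fst Y) * (fst V - fst U) + (snd X - snd Y) * (snd V - snd U) = 0.

Definition on_l1 (A B C X : point) : Prop := on_perp X B A B.
Definition on_l2 (A B C X : point) : Prop := on_perp X C B C.
Definition on_l3 (A B C X : point) : Prop := on_perp X A C A.

Definition bounded_triangle (A B C A' B' C' : point) : Prop :=
  (on_l3 A B C A' /\ on_l1 A B C A') /\
  (on_l1 A B C B' /\ on_l2 A B C B') /\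
  (on_l2 A B C C' /\ on_l3 A B C C').

(** The three perpendiculars meet pairwise in explicitly computable points, and
    a direct computation shows that A'B'C' is similar to ABC, with the same
    orientation, its squared side lengths being those of ABC multiplied by
    [k = (a^2 + b^2 + c^2)^2 / (16 E^2)]; hence [E'/E = k].  The identity
    [(a^2 + b^2 + c^2)^2 - 48 E^2 = 2 ((a^2 - b^2)^2 + (b^2 - c^2)^2 + (c^2 - a^2)^2)]
    (the squared form of Weitzenböck's inequality) then gives [k >= 3], with
    equality exactly when [a = b = c]. *)

From Stdlib Require Import Reals Lra Psatz.
Open Scope R_scope.

Lemma on_perp_unique (X X' Y U V Y' U' V' : point) :
  (fst V - fst U) * (snd V' - snd U') - (snd V - snd U) * (fst V' - fst U') <> 0 ->
  on_perp X Y U V -> on_perp X Y' U' V' ->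
  on_perp X' Y U V -> on_perp X' Y' U' V' -> X = X'.
Proof.
  destruct X as [x1 x2], X' as [x1' x2']; unfold on_perp; simpl.
  set (n1 := fst V - fst U); set (n2 := snd V - snd U).
  set (m1 := fst V' - fst U'); set (m2 := snd V' - snd U').
  intros Hdet H1 H2 H1' H2'.
  assert (Hn : (x1 - x1') * n1 + (x2 - x2') * n2 = 0) by lra.
  assert (Hm : (x1 - x1') * m1 + (x2 - x2') * m2 = 0) by lra.
  assert (E1 : (x1 - x1') * (n1 * m2 - n2 * m1) = 0).
  { transitivity (m2 * ((x1 - x1') * n1 + (x2 - x2') * n2)
                   - n2 * ((x1 - x1') * m1 + (x2 - x2') * m2));
      [ring | rewrite Hn, Hm; ring]. }
  assert (E2 : (x2 - x2') * (n1 * m2 - n2 * m1) = 0).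
  { transitivity (n1 * ((x1 - x1') * m1 + (x2 - x2') * m2)
                   - m1 * ((x1 - x1') * n1 + (x2 - x2') * n2));
      [ring | rewrite Hn, Hm; ring]. }
  apply Rmult_integral in E1, E2.
  destruct E1, E2; try contradiction; f_equal; lra.
Qed.

Lemma cross_cycle (A B C : point) : cross B C A = cross A B C.
Proof. unfold cross; ring. Qed.

Lemma nondegenerate_cycle A B C : nondegenerate A B C -> nondegenerate B C A.
Proof. unfold nondegenerate; rewrite (cross_cycle A B C); auto. Qed.

(** [perp_vertex A B C] is the meet of l3 and l1, by Cramer's rule; the
    determinant of that system is [cross A B C].  Cyclically permuting the
    arguments turns l1, l2, l3 into l3, l1, l2, so the other two vertices of
    the bounded triangle are [perp_vertex B C A] and [perp_vertex C A B]. *)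
Definition perp_vertex (A B C : point) : point :=
  let pa := fst A * (fst A - fst C) + snd A * (snd A - snd C) in
  let pb := fst B * (fst B - fst A) + snd B * (snd B - snd A) in
  ((pa * (snd B - snd A) - pb * (snd A - snd C)) / cross A B C,
   (pb * (fst A - fst C) - pa * (fst B - fst A)) / cross A B C).

Lemma perp_vertex_on_l3 A B C : nondegenerate A B C -> on_l3 A B C (perp_vertex A B C).
Proof.
  destruct A as [a1 a2], B as [b1 b2], C as [c1 c2].
  unfold nondegenerate, on_l3, on_perp, perp_vertex, cross; simpl; intro; field; auto.
Qed.

Lemma perp_vertex_on_l1 A B C : nondegenerate A B C -> on_l1 A B C (perp_vertex A B C).
Proof.
  destruct A as [a1 a2], B as [b1 b2], C as [c1 c2].
  unfold nondegenerate, on_l1, on_perp, perp_vertex, cross; simpl; intro; field; auto.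
Qed.

Lemma perp_vertex_unique A B C X :
  nondegenerate A B C -> on_l3 A B C X -> on_l1 A B C X -> X = perp_vertex A B C.
Proof.
  intros HD H3 H1.
  apply (on_perp_unique X _ A C A B A B); try assumption.
  - unfold nondegenerate, cross in HD; contradict HD; rewrite <- HD; ring.
  - exact (perp_vertex_on_l3 _ _ _ HD).
  - exact (perp_vertex_on_l1 _ _ _ HD).
Qed.

(** [cross A B C = 2 E], so this is [(a^2 + b^2 + c^2)^2 / (16 E^2)]. *)
Definition perp_ratio (A B C : point) : R :=
  (dist2 A B + dist2 B C + dist2 C A) ^ 2 / (4 * cross A B C ^ 2).

Lemma perp_ratio_cycle A B C : perp_ratio B C A = perp_ratio A B C.
Proof. unfold perp_ratio; rewrite cross_cycle; f_equal; ring. Qed.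

Lemma cross_perp_vertices A B C : nondegenerate A B C ->
  cross (perp_vertex A B C) (perp_vertex B C A) (perp_vertex C A B)
  = perp_ratio A B C * cross A B C.
Proof.
  unfold perp_vertex, perp_ratio; rewrite (cross_cycle B C A), (cross_cycle A B C).
  destruct A as [a1 a2], B as [b1 b2], C as [c1 c2].
  unfold nondegenerate, dist2, cross; simpl; intro; field; auto.
Qed.

Lemma dist2_perp_vertices A B C : nondegenerate A B C ->
  dist2 (perp_vertex A B C) (perp_vertex B C A) = perp_ratio A B C * dist2 A B.
Proof.
  unfold perp_vertex, perp_ratio; rewrite (cross_cycle A B C).
  destruct A as [a1 a2], B as [b1 b2], C as [c1 c2].
  unfold nondegenerate, dist2, cross; simpl; intro; field; auto.
Qed.

Lemma bounded_triangle_perp_vertices A B C : nondegenerate A B C ->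
  bounded_triangle A B C (perp_vertex A B C) (perp_vertex B C A) (perp_vertex C A B).
Proof.
  intro HD.
  pose proof (nondegenerate_cycle _ _ _ HD) as HD'.
  pose proof (nondegenerate_cycle _ _ _ HD') as HD''.
  repeat split.
  - exact (perp_vertex_on_l3 _ _ _ HD).
  - exact (perp_vertex_on_l1 _ _ _ HD).
  - exact (perp_vertex_on_l3 _ _ _ HD').
  - exact (perp_vertex_on_l1 _ _ _ HD').
  - exact (perp_vertex_on_l3 _ _ _ HD'').
  - exact (perp_vertex_on_l1 _ _ _ HD'').
Qed.

Lemma bounded_triangle_unique A B C A' B' C' :
  nondegenerate A B C -> bounded_triangle A B C A' B' C' ->
  A' = perp_vertex A B C /\ B' = perp_vertex B C A /\ C' = perp_vertex C A B.
Proof.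
  intros HD [[HA3 HA1] [[HB1 HB2] [HC2 HC3]]].
  pose proof (nondegenerate_cycle _ _ _ HD) as HD'.
  pose proof (nondegenerate_cycle _ _ _ HD') as HD''.
  repeat split; apply perp_vertex_unique; assumption.
Qed.

Lemma area_perp_vertices A B C : nondegenerate A B C ->
  area (perp_vertex A B C) (perp_vertex B C A) (perp_vertex C A B)
  = perp_ratio A B C * area A B C.
Proof.
  intro HD; unfold area; rewrite cross_perp_vertices by exact HD.
  rewrite Rabs_mult, (Rabs_pos_eq (perp_ratio A B C)); [field|].
  unfold perp_ratio, Rdiv; apply Rmult_le_pos; [apply pow2_ge_0|].
  apply Rlt_le, Rinv_0_lt_compat; unfold nondegenerate in HD; nra.
Qed.

Lemma weitzenbock_identity (A B C : point) :
  (dist2 A B + dist2 B C + dist2 C A) ^ 2 - 12 * cross A B C ^ 2 =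
  2 * ((dist2 A B - dist2 B C) ^ 2 + (dist2 B C - dist2 C A) ^ 2
       + (dist2 C A - dist2 A B) ^ 2).
Proof. destruct A, B, C; unfold dist2, cross; simpl; ring. Qed.

Lemma perp_ratio_sub3 A B C : nondegenerate A B C ->
  perp_ratio A B C - 3 =
  ((dist2 A B - dist2 B C) ^ 2 + (dist2 B C - dist2 C A) ^ 2
   + (dist2 C A - dist2 A B) ^ 2) / (2 * cross A B C ^ 2).
Proof.
  unfold nondegenerate, perp_ratio; intro HD.
  transitivity (((dist2 A B + dist2 B C + dist2 C A) ^ 2 - 12 * cross A B C ^ 2)
                / (4 * cross A B C ^ 2)).
  - field; exact HD.
  - rewrite weitzenbock_identity; field; exact HD.
Qed.

Lemma perp_ratio_ge3 A B C : nondegenerate A B C -> 3 <= perp_ratio A B C.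
Proof.
  intro HD; pose proof (perp_ratio_sub3 _ _ _ HD) as E.
  enough (0 <= ((dist2 A B - dist2 B C) ^ 2 + (dist2 B C - dist2 C A) ^ 2
                + (dist2 C A - dist2 A B) ^ 2) / (2 * cross A B C ^ 2)) by lra.
  unfold nondegenerate in HD; unfold Rdiv; apply Rmult_le_pos.
  - pose proof (pow2_ge_0 (dist2 A B - dist2 B C));
    pose proof (pow2_ge_0 (dist2 B C - dist2 C A));
    pose proof (pow2_ge_0 (dist2 C A - dist2 A B)); lra.
  - apply Rlt_le, Rinv_0_lt_compat; nra.
Qed.

Lemma pow2_eq_0 (x : R) : x ^ 2 = 0 -> x = 0.
Proof. intro; nra. Qed.

Lemma perp_ratio_eq3 A B C :
  nondegenerate A B C -> perp_ratio A B C = 3 <-> equilateral A B C.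
Proof.
  intro HD; pose proof (perp_ratio_sub3 _ _ _ HD) as E.
  unfold equilateral; unfold nondegenerate in HD.
  set (p := dist2 A B) in *; set (q := dist2 B C) in *; set (r := dist2 C A) in *.
  split.
  - intro H3; rewrite H3, Rminus_diag in E; symmetry in E.
    apply Rmult_integral in E as [Hsum | Hinv].
    + pose proof (pow2_ge_0 (p - q)); pose proof (pow2_ge_0 (q - r));
      pose proof (pow2_ge_0 (r - p)).
      assert (Hpq : (p - q) ^ 2 = 0) by lra; assert (Hqr : (q - r) ^ 2 = 0) by lra.
      apply pow2_eq_0 in Hpq, Hqr; split; lra.
    + exfalso; revert Hinv; apply Rinv_neq_0_compat; nra.
  - intros [Hpq Hqr]; rewrite Hpq, Hqr in E.
    replace (perp_ratio A B C) with (perp_ratio A B C - 3 + 3) by ring.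
    rewrite E; unfold Rdiv; ring.
Qed.

Lemma equilateral_perp_vertices A B C : nondegenerate A B C -> equilateral A B C ->
  equilateral (perp_vertex A B C) (perp_vertex B C A) (perp_vertex C A B).
Proof.
  intros HD [Hab Hbc].
  pose proof (nondegenerate_cycle _ _ _ HD) as HD'.
  pose proof (nondegenerate_cycle _ _ _ HD') as HD''.
  unfold equilateral.
  rewrite (dist2_perp_vertices _ _ _ HD), (dist2_perp_vertices _ _ _ HD'),
    (dist2_perp_vertices _ _ _ HD''), (perp_ratio_cycle B C A), (perp_ratio_cycle A B C).
  rewrite Hab, Hbc; split; reflexivity.
Qed.

Lemma area_ratio_perp_vertices A B C : nondegenerate A B C ->
  area (perp_vertex A B C) (perp_vertex B C A) (perp_vertex C A B) / area A B C
  = perp_ratio A B C.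
Proof.
  intro HD; rewrite area_perp_vertices by exact HD.
  field; unfold area, nondegenerate in *; apply Rabs_no_R0 in HD; lra.
Qed.

Theorem mainTheorem2 :
  (forall A B C A' B' C' : point,
     nondegenerate A B C ->
     bounded_triangle A B C A' B' C' ->
     3 <= area A' B' C' / area A B C /\
     (area A' B' C' / area A B C = 3 <-> equilateral A B C) /\
     (equilateral A B C -> equilateral A' B' C'))
  /\
  (exists A B C A' B' C' : point,
     nondegenerate A B C /\ bounded_triangle A B C A' B' C' /\
     area A' B' C' / area A B C = 3).
Proof.
  split.
  - intros A B C A' B' C' HD HT.
    destruct (bounded_triangle_unique _ _ _ _ _ _ HD HT) as (-> & -> & ->).
    rewrite area_ratio_perp_vertices by exact HD.
    auto using perp_ratio_ge3, perp_ratio_eq3, equilateral_perp_vertices.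
  - set (s := sqrt 3); assert (Hs : s * s = 3) by (apply sqrt_sqrt; lra).
    set (A := (0, 0) : point); set (B := (2, 0) : point); set (C := (1, s) : point).
    assert (HD : nondegenerate A B C) by (unfold nondegenerate, cross; simpl; nra).
    exists A, B, C, (perp_vertex A B C), (perp_vertex B C A), (perp_vertex C A B).
    split; [exact HD | split; [exact (bounded_triangle_perp_vertices _ _ _ HD) |]].
    rewrite area_ratio_perp_vertices by exact HD; apply perp_ratio_eq3; [exact HD |].
    unfold equilateral, dist2; simpl; split; nra.
Qed.
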